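(* Let $\mathcal{C}$ be a finite Coxeter group of rank $p$, realized as a group of real orthogonal $p\times p$ matrices acting on $V=\mathbb{R}^p$. Let $R$ and $\bar R$ be two elements of $\mathcal{C}$ (each a product of reflections $R_v$ in root vectors, or the identity), and consider the linearized covariant derivative $$D f=\Big[D_L+\delta^{nm}e^{\alpha\dot\alpha}(P_+)_{nm}{}^{kl}\,(y_{\alpha k}\hat{\bar\partial}_{\dot\alpha l}+\bar y_{\dot\alpha l}\hat\partial_{\alpha k})-i\,\delta^{nm}e^{\alpha\dot\alpha}(P_-)_{nm}{}^{kl}\,(y_{\alpha k}\bar y_{\dot\alpha l}-\hat\partial_{\alpha k}\hat{\bar\partial}_{\dot\alpha l})\Big]f,$$ with $P_\pm^{kl}=\tfrac12\delta^{nm}\big(\mathbb{1}^k_n\bar{\mathbb{1}}^l_m\pm R^k{}_n\bar R^l{}_m\big)$, acting on functions $f(y_1,\dots,y_p,\bar y_1,\dots,\bar y_p|x)$. Then the corresponding module is disentangled (i.e. isomorphic to a tensor product of standard adjoint and twisted-adjoint modules of the standard $4d$ higher-spin theory) if and only if $(R\bar R^{T})^2=\mathbb{1}$.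
   Context: Variables: for each $n\in\{1,\dots,p\}$ there are commuting two-component spinor variables $y^\alpha_n$ ($\alpha=1,2$) and $\bar y^{\dot\alpha}_n$ ($\dot\alpha=1,2$), with real-conjugate pairing $y^\dagger=\bar y$; $\partial_{\alpha n}=\partial/\partial y^\alpha_n$, $\bar\partial_{\dot\alpha n}=\partial/\partial\bar y^{\dot\alpha}_n$ (hats denote dressing by idempotents and may be ignored here). $e^{\alpha\dot\alpha}$ is the $AdS_4$ vierbein one-form and $D_L=d_x+\delta^{nm}(\omega^{\alpha\beta}y_{\alpha n}\partial_{\beta m}+\bar\omega^{\dot\alpha\dot\beta}\bar y_{\dot\alpha n}\bar\partial_{\dot\beta m})$ is the Lorentz covariant derivative built from the $AdS_4$ spin connection. The standard adjoint module of the $4d$ higher-spin theory (for a single pair $y,\bar y$) is defined by the operator $D_L+e^{\alpha\dot\alpha}(y_\alpha\bar\partial_{\dot\alpha}+\bar y_{\dot\alpha}\partial_\alpha)$, and the standard twisted-adjoint module by $D_L-ie^{\alpha\dot\alpha}(y_\alpha\bar y_{\dot\alpha}-\partial_\alpha\bar\partial_{\dot\alpha})$. A module defined by $D$ is called disentangled if, after a real (orthogonal) linear change of the Coxeter labels $n$ of the variables $y_n,\bar y_n$, the operator $D$ becomes a sum over the new labels of standard adjoint or twisted-adjoint operators each acting on one pair of variables, i.e. the module is isomorphic to a tensor product of standard adjoint and twisted-adjoint modules; otherwise it is called entangled. *)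

From HB Require Import structures.
From mathcomp Require Import all_boot all_order all_algebra.
From mathcomp Require Import mpoly.
From mathcomp Require Import complex.
From mathcomp Require Import reals.
Set Implicit Arguments. Unset Strict Implicit. Unset Printing Implicit Defensive.
Import Order.TTheory GRing.Theory Num.Theory.
Local Open Scope ring_scope.
Local Open Scope complex_scope.

Section HS.
Variables (R : realType) (p : nat).
Local Notation C := (R[i]).

Definition reflection (v : 'rV[R]_p) : 'M[R]_p :=
  1%:M - ((2 / (v *m v^T) 0 0) *: (v^T *m v)).

Definition refl_prod (vs : seq 'rV[R]_p) : 'M[R]_p :=
  foldr (fun v M => reflection v *m M) 1%:M vs.

Definition in_reflgroup (roots : seq 'rV[R]_p) (M : 'M[R]_p) : Prop :=
  exists vs : seq 'rV[R]_p, all (fun v => v \in roots) vs /\ M = refl_prod vs.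

Definition finite_coxeter (roots : seq 'rV[R]_p) : Prop :=
  [/\ all (fun v => v != 0) roots,
      (\sum_(v <- roots) <<v>> == 1%:M)%MS
    & exists elts : seq 'M[R]_p,
        forall M, in_reflgroup roots M -> M \in elts].

Definition orthogonal (O : 'M[R]_p) : Prop := O *m O^T = 1%:M.

(* a variable is (barred?, spinor index, Coxeter label):
   (false, a, n) is y^a_n and (true, a, n) is ybar^{a-dot}_n *)
Definition vlabel := (bool * 'I_2 * 'I_p)%type.
Definition nvar := #|{: vlabel}|.
Definition Poly := {mpoly C[nvar]}.

Definition var (b : bool) (a : 'I_2) (n : 'I_p) : Poly :=
  'X_(enum_rank (b, a, n)).

(* epsilon symbol, eps_{12} = 1 *)
Definition eps (a c : 'I_2) : C :=
  if (val a == 0%N) && (val c == 1%N) then 1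
  else if (val a == 1%N) && (val c == 0%N) then -1 else 0.

Definition ylo (b : bool) (a : 'I_2) (n : 'I_p) : Poly :=
  \sum_(c < 2) eps c a *: var b c n.

Definition der (b : bool) (a : 'I_2) (n : 'I_p) (f : Poly) : Poly :=
  mderiv (enum_rank (b, a, n)) f.

Definition cR (x : R) : C := x%:C.

Definition Pplus (Rm Rb : 'M[R]_p) (k l : 'I_p) : C :=
  cR (2^-1 * \sum_(n < p) ((1%:M : 'M[R]_p) k n * (1%:M : 'M[R]_p) l n + Rm k n * Rb l n)).
Definition Pminus (Rm Rb : 'M[R]_p) (k l : 'I_p) : C :=
  cR (2^-1 * \sum_(n < p) ((1%:M : 'M[R]_p) k n * (1%:M : 'M[R]_p) l n - Rm k n * Rb l n)).

(* The e^{a adot} component of D - D_L, acting on f(y, ybar) *)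
Definition Dvier (Rm Rb : 'M[R]_p) (a ad : 'I_2) (f : Poly) : Poly :=
  \sum_(k < p) \sum_(l < p)
    ( Pplus Rm Rb k l *: (ylo false a k * der true ad l f + ylo true ad l * der false a k f)
    - ('i * Pminus Rm Rb k l) *: (ylo false a k * ylo true ad l * f
                                  - der false a k (der true ad l f))).

(* e^{a adot} components of the standard adjoint / twisted-adjoint operators
   acting on the single pair of variables with label n *)
Definition Dadj (n : 'I_p) (a ad : 'I_2) (f : Poly) : Poly :=
  ylo false a n * der true ad n f + ylo true ad n * der false a n f.
Definition Dtw (n : 'I_p) (a ad : 'I_2) (f : Poly) : Poly :=
  - ('i *: (ylo false a n * ylo true ad n * f - der false a n (der true ad n f))).

(* real linear change of Coxeter labels: y'_n = O_{nm} y_m, ybar'_n = O_{nm} ybar_m.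
   relabel O g is a function g of the new variables written in the old ones. *)
Definition relabel_var (O : 'M[R]_p) (j : 'I_nvar) : Poly :=
  let: (b, a, n) := enum_val j in \sum_(m < p) cR (O n m) *: var b a m.
Definition relabel (O : 'M[R]_p) (g : Poly) : Poly :=
  mmap (@mpolyC _ C) (relabel_var O) g.

(* disentangled: after an orthogonal relabelling, D becomes a sum over the new
   labels of standard adjoint (s n = true) or twisted-adjoint (s n = false)
   operators, each acting on one pair.  (D_L and d_x are label-invariant and
   common to both sides.) *)
Definition disentangled (Rm Rb : 'M[R]_p) : Prop :=
  exists O : 'M[R]_p, exists s : 'I_p -> bool,
    orthogonal O /\
    forall (a ad : 'I_2) (g : Poly),
      Dvier Rm Rb a ad (relabel O g)
      = relabel O (\sum_(n < p) (if s n then Dadj n a ad g else Dtw n a ad g)).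

End HS.

(* Put M = R Rbar^T, so that P_+ = (1 + M)/2 and P_- = (1 - M)/2.  An orthogonal
   relabelling O of the oscillators is a ring automorphism under which the y, ybar
   and the derivatives all transform as vectors, so in the new labels D has the
   same shape with P_+- replaced by O P_+- O^T; D is disentangled iff both become
   complementary 0/1 diagonal matrices.  Applied to the constant 1, D only keeps
   the y ybar term, whose coefficient matrix is P_-: disentanglement thus forces
   P_- = O^T diag(t) O with t in {0,1}, hence M = O^T (1 - 2 diag t) O squares to 1.
   Conversely M is orthogonal, being a product of reflections, so M^2 = 1 makes it
   a symmetric involution; an orthogonal O (built from Householder reflections)
   diagonalises it with eigenvalues +-1, and then O P_+- O^T have the required
   complementary 0/1 diagonals. *)

From Pilot Require Import Defs.
From HB Require Import structures.
From mathcomp Require Import all_boot all_order all_algebra.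
From mathcomp Require Import mpoly complex reals.
From mathcomp Require Import ring.

Set Implicit Arguments.
Unset Strict Implicit.
Unset Printing Implicit Defensive.

Import Order.TTheory GRing.Theory Num.Theory.
Local Open Scope ring_scope.
Local Open Scope complex_scope.

(* [all_algebra] exports an unrelated [orthogonal] (for sesquilinear forms). *)
Local Notation orthogonal := Defs.orthogonal.

(** * Orthogonal diagonalisation of symmetric involutions *)

Section OrthogonalMatrices.
Variables (R : realType) (n : nat).
Implicit Types (A B M O : 'M[R]_n) (v : 'rV[R]_n).

Lemma orthogonal_mulTmx O : orthogonal O -> O^T *m O = 1%:M.
Proof. by move=> /mulmx1C. Qed.

Lemma orthogonal_mul A B : orthogonal A -> orthogonal B -> orthogonal (A *m B).
Proof.
by rewrite /orthogonal => HA HB; rewrite trmx_mul mulmxA -(mulmxA A) HB mulmx1.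
Qed.

Lemma orthogonal_tr A : orthogonal A -> orthogonal A^T.
Proof. by move=> /orthogonal_mulTmx; rewrite /orthogonal trmxK. Qed.

Lemma dot_self_gt0 v : v != 0 -> 0 < (v *m v^T) 0 0.
Proof.
move=> v_neq0; have sq_ge0 i : 0 <= v 0 i * v^T i 0 by rewrite mxE -expr2 sqr_ge0.
rewrite lt_def mxE sumr_ge0 // andbT; apply: contra v_neq0.
rewrite psumr_eq0 // => /allP v_sq0; apply/eqP/rowP => j.
by have := v_sq0 j (mem_index_enum _); rewrite !mxE mulf_eq0 orbb => /eqP.
Qed.

Lemma reflection_sym v : (reflection v)^T = reflection v.
Proof. by rewrite /reflection linearB /= trmx1 linearZ /= trmx_mul trmxK. Qed.

Lemma reflection_orthogonal v : v != 0 -> orthogonal (reflection v).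
Proof.
move=> /dot_self_gt0; rewrite /orthogonal reflection_sym /reflection.
set a := (v *m v^T) 0 0; set Q := v^T *m v => a_gt0.
have QQ : Q *m Q = a *: Q.
  by rewrite /Q mulmxA -(mulmxA v^T) [v *m v^T]mx11_scalar mul_mx_scalar -scalemxAl.
rewrite mulmxBl !mulmxBr !mul1mx !mulmx1 -!scalemxAl -!scalemxAr QQ !scalerA.
rewrite (_ : 2 / a * (2 / a) * a = 2 / a + 2 / a); last by field; rewrite gt_eqF.
by rewrite scalerDl opprB addrK subrK.
Qed.

Lemma refl_prod_orthogonal (roots vs : seq 'rV[R]_n) :
  all (fun v => v != 0) roots -> all (fun v => v \in roots) vs ->
  orthogonal (refl_prod vs).
Proof.
move=> /allP roots_neq0; elim: vs => [|v vs IH] /=.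
  by rewrite /orthogonal trmx1 mulmx1.
case/andP=> v_root vs_roots; apply: orthogonal_mul; last exact: IH.
exact/reflection_orthogonal/roots_neq0.
Qed.

Lemma normalized_row (u : 'rV[R]_n) : u != 0 ->
  let w := (Num.sqrt ((u *m u^T) 0 0))^-1 *: u in w *m w^T = 1%:M.
Proof.
move=> /dot_self_gt0 a_gt0 /=; rewrite [LHS]mx11_scalar; congr (_%:M).
rewrite linearZ /= -scalemxAl -scalemxAr scalerA mxE.
have sqrt_neq0 : Num.sqrt ((u *m u^T) 0 0) != 0 by rewrite gt_eqF // sqrtr_gt0.
by rewrite -[X in _ * X](sqr_sqrtr (ltW a_gt0)); field.
Qed.

End OrthogonalMatrices.

Section Diagonalization.
Variables (R : realType) (n : nat).

Lemma involution_unit_eigenvector (M : 'M[R]_n.+1) : M *m M = 1%:M ->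
  exists u : 'rV_n.+1, exists d : R, u *m u^T = 1%:M /\ u *m M = d *: u.
Proof.
move=> MM; set e := delta_mx 0 ord0 : 'rV[R]_n.+1.
(* Either [e (1 + M)] is an eigenvector for [1], or [e] is one for [-1]. *)
have [u0 [d [u0_neq0 u0M]]] : exists u0 : 'rV_n.+1, exists d : R,
    u0 != 0 /\ u0 *m M = d *: u0.
  have [e1M0|e1M_neq0] := eqVneq (e *m (1%:M + M)) 0.
    exists e, (-1); split.
      by apply/negP => /eqP/rowP/(_ ord0); rewrite !mxE eqxx /= => /eqP; rewrite oner_eq0.
    by move/eqP: e1M0; rewrite mulmxDr mulmx1 scaleN1r addr_eq0 eq_sym eqr_oppLR => /eqP.
  exists (e *m (1%:M + M)), 1; split => //.
  by rewrite scale1r -mulmxA mulmxDl mul1mx MM addrC.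
exists ((Num.sqrt ((u0 *m u0^T) 0 0))^-1 *: u0), d; split; first exact: normalized_row.
by rewrite -scalemxAl u0M !scalerA mulrC.
Qed.

(* A Householder reflection sends the first basis vector to [u]. *)
Lemma orthogonal_with_first_row (u : 'rV[R]_n.+1) : u *m u^T = 1%:M ->
  exists2 H : 'M[R]_n.+1, orthogonal H & delta_mx 0 ord0 *m H = u.
Proof.
move=> uu; set e := delta_mx 0 ord0 : 'rV[R]_n.+1.
have [->|u_neq_e] := eqVneq u e.
  by exists 1%:M; rewrite ?mulmx1 // /orthogonal trmx1 mulmx1.
set w := u - e; have w_neq0 : w != 0 by rewrite subr_eq0.
exists (reflection w); first exact: reflection_orthogonal.
have ee : e *m e^T = 1%:M by rewrite -rowE; apply/matrixP => i j; rewrite !ord1 !mxE.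
have eu : e *m u^T = (u 0 ord0)%:M by rewrite -rowE; apply/matrixP => i j; rewrite !ord1 !mxE.
have ue : u *m e^T = (u 0 ord0)%:M by rewrite -[LHS]trmxK trmx_mul trmxK eu tr_scalar_mx.
set b := u 0 ord0 - 1.
have ew : e *m w^T = b%:M by rewrite /w linearB /= mulmxBr eu ee raddfB.
have ww : (w *m w^T) 0 0 = - (2 * b).
  by rewrite /w linearB /= mulmxBl !mulmxBr uu ue eu ee !mxE eqxx /= !mulr1n /b; ring.
have b_neq0 : b != 0.
  by have := dot_self_gt0 w_neq0; rewrite ww oppr_gt0 pmulr_rlt0 // => /ltr0_neq0.
rewrite /reflection mulmxBr mulmx1 -scalemxAr mulmxA ew mul_scalar_mx scalerA ww.
rewrite (_ : 2 / - (2 * b) * b = -1); last by field.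
by rewrite scaleN1r opprK /w addrC subrK.
Qed.

Lemma orthogonal_block1 (O : 'M[R]_n) :
  orthogonal O -> orthogonal (block_mx (1%:M : 'M_1) 0 0 O).
Proof.
rewrite /orthogonal tr_block_mx mulmx_block !trmx0 trmx1 !mulmx0 !mul0mx !addr0 !add0r.
by move=> ->; rewrite mulmx1 -scalar_mx_block.
Qed.

Lemma sym_first_row_block (N : 'M[R]_(1 + n)) (d : R) :
  N^T = N -> (delta_mx 0 ord0 : 'rV_(1 + n)) *m N = d *: delta_mx 0 ord0 ->
  N = block_mx d%:M 0 0 (drsubmx N).
Proof.
move=> Nsym eN.
have N0j j : N ord0 j = d * (j == ord0)%:R.
  by have /rowP/(_ j) := eN; rewrite -rowE !mxE eqxx.
have lshift0 : lshift n (0 : 'I_1) = ord0 by apply/val_inj.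
rewrite -[LHS](@submxK _ 1 n 1 n); congr block_mx; apply/matrixP => i j;
  rewrite !ord1 !mxE lshift0.
- by rewrite N0j !eqxx mulr1.
- by rewrite N0j mulr0.
- by rewrite -Nsym mxE N0j mulr0.
Qed.

End Diagonalization.

Lemma sym_involution_diag (R : realType) n (M : 'M[R]_n) :
  M^T = M -> M *m M = 1%:M ->
  exists2 O : 'M_n, orthogonal O & exists dv : 'rV_n, O *m M *m O^T = diag_mx dv.
Proof.
elim: n M => [|n IH] M Msym MM.
  by exists 1%:M; [rewrite /orthogonal trmx1 mulmx1 | exists 0; apply/matrixP => -[]].
have [u [d [uu uM]]] := involution_unit_eigenvector MM.
have [H H_orth eH] := orthogonal_with_first_row uu.
have HtH := orthogonal_mulTmx H_orth.
pose N : 'M_(1 + n) := H *m M *m H^T.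
have Nsym : N^T = N by rewrite /N !trmx_mul trmxK Msym mulmxA.
have NN : N *m N = 1%:M.
  by rewrite /N !mulmxA -(mulmxA _ H^T) HtH mulmx1 -(mulmxA H M) MM mulmx1.
have eN : (delta_mx 0 ord0 : 'rV_(1 + n)) *m N = d *: delta_mx 0 ord0.
  by rewrite /N !mulmxA eH uM -scalemxAl -eH -mulmxA H_orth mulmx1.
have Nblock := sym_first_row_block Nsym eN.
have [O' O'_orth [dv' O'N']] : exists2 O' : 'M_n, orthogonal O' &
    exists dv' : 'rV_n, O' *m drsubmx N *m O'^T = diag_mx dv'.
  apply: IH; first by rewrite trmx_drsub Nsym.
  rewrite Nblock mulmx_block (@scalar_mx_block _ 1 n 1) in NN.
  by have [_ _ _] := eq_block_mx NN; rewrite mul0mx add0r.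
pose B : 'M_(1 + n) := block_mx 1%:M 0 0 O'.
exists (B *m H); first exact/orthogonal_mul/H_orth/orthogonal_block1.
exists (row_mx (const_mx d : 'rV_1) dv').
have -> : B *m H *m M *m (B *m H)^T = B *m N *m B^T by rewrite /N trmx_mul !mulmxA.
rewrite Nblock.
rewrite /B tr_block_mx !trmx0 trmx1 !mulmx_block.
rewrite !mulmx0 !mul0mx !addr0 !add0r !mulmx1 !mul1mx O'N'.
by rewrite mul0mx -diag_const_mx -diag_mx_row.
Qed.

Section Involutions.
Variables (R : realType) (n : nat).

Lemma diag_involution_sign (dv : 'rV[R]_n) :
  diag_mx dv *m diag_mx dv = 1%:M -> forall i, dv 0 i = 1 \/ dv 0 i = -1.
Proof.
move=> /matrixP dd i; have := dd i i; rewrite mul_diag_mx !mxE eqxx mulr1n => dvi2.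
have : dv 0 i ^+ 2 == 1 by rewrite expr2 dvi2.
by rewrite sqrf_eq1 => /orP[] /eqP; [left | right].
Qed.

Lemma involution_projections_diag (M : 'M[R]_n) :
  orthogonal M -> M *m M = 1%:M ->
  exists2 O : 'M_n, orthogonal O & exists s : 'I_n -> bool,
    O *m (2^-1 *: (1%:M + M)) *m O^T = diag_mx (\row_i (s i)%:R) /\
    O *m (2^-1 *: (1%:M - M)) *m O^T = diag_mx (\row_i (~~ s i)%:R).
Proof.
move=> M_orth MM.
have Msym : M^T = M.
  by rewrite -[M^T]mulmx1 -MM mulmxA (orthogonal_mulTmx M_orth) mul1mx.
have [O O_orth [dv ODO]] := sym_involution_diag Msym MM.
have /diag_involution_sign dv_sign : diag_mx dv *m diag_mx dv = 1%:M.
  rewrite -ODO !mulmxA -(mulmxA _ O^T) (orthogonal_mulTmx O_orth) mulmx1.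
  by rewrite -(mulmxA O M M) MM mulmx1.
exists O => //; exists (fun i => 0 < dv 0 i).
split; apply/matrixP => i j;
  rewrite -scalemxAr -scalemxAl mulmxDr mulmxDl ?mulmxN ?mulNmx mulmx1 O_orth ODO !mxE;
  case: (i == j); rewrite ?mulr0n ?addr0 ?subr0 ?mulr0 //= !mulr1n;
  by case: (dv_sign i) => ->; rewrite ?ltr01 ?ltr0N1 /=; field.
Qed.

Lemma involution_of_diag_projection (M O : 'M[R]_n) (t : 'I_n -> bool) :
  orthogonal O -> 2^-1 *: (1%:M - M) = O^T *m diag_mx (\row_i (t i)%:R) *m O ->
  M *m M = 1%:M.
Proof.
move=> O_orth MO; set E := diag_mx _ in MO.
have OtO := orthogonal_mulTmx O_orth.
have -> : M = O^T *m (1%:M - 2 *: E) *m O.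
  rewrite mulmxBr mulmxBl mulmx1 OtO -scalemxAr -scalemxAl -MO scalerA.
  by rewrite mulfV ?pnatr_eq0 // scale1r opprB addrC subrK.
have EE : (1%:M - 2 *: E) *m (1%:M - 2 *: E) = 1%:M.
  rewrite -diag_const_mx /E -linearZ -linearB mul_diag_mx.
  apply/matrixP => i j; rewrite !mxE.
  by case: (i == j); case: (t i); rewrite /= ?mulr0n ?mulr1n; ring.
rewrite !mulmxA -(mulmxA (O^T *m _) O O^T) O_orth mulmx1.
by rewrite -(mulmxA O^T _ (1%:M - 2 *: E)) EE mulmx1.
Qed.

End Involutions.

(** * Derivations and substitutions of polynomials *)

Section TwistedDerivation.
Variables (K : comNzRingType) (k : nat).
Variables (phi D : {mpoly K[k]} -> {mpoly K[k]}).
Hypothesis phi1 : phi 1 = 1.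
Hypothesis D_linear : linear D.
Hypothesis D_leibniz : forall f g, D (f * g) = D f * phi g + phi f * D g.

Lemma twisted_derivation_eq0 : (forall i, D 'X_i = 0) -> forall f, D f = 0.
Proof.
move=> DX0.
have D_lin c f g : D (c *: f + g) = c *: D f + D g := D_linear c f g.
have double_eq0 (x : {mpoly K[k]}) : x = x + x -> x = 0.
  by move=> xx; apply: (addrI x); rewrite addr0 -xx.
have D0 : D 0 = 0 by apply: double_eq0; have := D_lin 1 0 0; rewrite !scale1r addr0.
have D1 : D 1 = 0.
  by apply: double_eq0; rewrite -{1}(mulr1 1) D_leibniz phi1 mulr1 mul1r.
have DXm m : D 'X_[m] = 0.
  rewrite mpolyXE_id; apply: (big_ind (fun x => D x = 0)) => // [x y Dx Dy|i _].
    by rewrite D_leibniz Dx Dy mul0r mulr0 addr0.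
  elim: (m i) => [|e IHe]; first by rewrite expr0.
  by rewrite exprS D_leibniz DX0 IHe mul0r mulr0 addr0.
by elim/mpolyind => [|c m f _ _ Df]; rewrite ?D_lin ?DXm ?Df ?scaler0 ?addr0.
Qed.

End TwistedDerivation.

Section SubstitutionChainRule.
Variables (K : comNzRingType) (k : nat) (I : finType).
Variables (phi d0 : {mpoly K[k]} -> {mpoly K[k]}) (d : I -> {mpoly K[k]} -> {mpoly K[k]}).
Variable w : I -> K.
Hypothesis phi1 : phi 1 = 1.
Hypothesis phi_linear : linear phi.
Hypothesis phiM : {morph phi : f g / f * g}.
Hypothesis d0_linear : linear d0.
Hypothesis d_linear : forall i, linear (d i).
Hypothesis d0M : forall f g, d0 (f * g) = d0 f * g + f * d0 g.
Hypothesis dM : forall i f g, d i (f * g) = d i f * g + f * d i g.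

Lemma substitution_chain_rule :
  (forall j, d0 (phi 'X_j) = \sum_i w i *: phi (d i 'X_j)) ->
  forall f, d0 (phi f) = \sum_i w i *: phi (d i f).
Proof.
move=> chainX f; apply/eqP; rewrite -subr_eq0; apply/eqP; move: f.
have phiD f g : phi (f + g) = phi f + phi g by rewrite -[f]scale1r phi_linear !scale1r.
apply: (twisted_derivation_eq0 phi1) => [c f g|f g|j]; last first.
- by rewrite chainX subrr.
- rewrite phiM d0M.
  under eq_bigr do rewrite dM phiD !phiM scalerDr scalerAl scalerAr.
  by rewrite big_split -mulr_suml -mulr_sumr mulrBl mulrBr opprD addrACA.
rewrite phi_linear d0_linear (eq_bigr (fun i => c *: (w i *: phi (d i f)) + w i *: phi (d i g))).
  by rewrite big_split -scaler_sumr scalerBr opprD addrACA.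
by move=> i _; rewrite d_linear phi_linear scalerDr !scalerA mulrC.
Qed.

End SubstitutionChainRule.

Lemma mulr_sumZ (K : comNzRingType) (A : comAlgType K) (I J : finType)
    (u : I -> K) (v : J -> K) (x : I -> A) (y : J -> A) :
  (\sum_i u i *: x i) * (\sum_j v j *: y j) = \sum_i \sum_j (u i * v j) *: (x i * y j).
Proof.
rewrite mulr_suml; apply: eq_bigr => i _; rewrite mulr_sumr; apply: eq_bigr => j _.
by rewrite -scalerAl -scalerAr scalerA.
Qed.

Lemma linear_sumZ (K : comNzRingType) (U V : lmodType K) (f : U -> V) (I : finType)
    (w : I -> K) (x : I -> U) :
  linear f -> f (\sum_i w i *: x i) = \sum_i w i *: f (x i).
Proof.
move=> f_lin; pose g : {linear U -> V} := HB.pack f (GRing.isLinear.Build _ _ _ _ f f_lin).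
rewrite (_ : f = g) // linear_sum.
by under eq_bigr do rewrite linearZ.
Qed.

Lemma morph_mul_expand (K : comNzRingType) (A : comAlgType K) (I : finType)
  (phi : A -> A) (O : I -> I -> K) (y y' : I -> A) n m :
  {morph phi : f g / f * g} ->
  (forall n, phi (y n) = \sum_k O n k *: y k) ->
  (forall m, phi (y' m) = \sum_l O m l *: y' l) ->
  phi (y n * y' m) = \sum_k \sum_l (O n k * O m l) *: (y k * y' l).
Proof. by move=> phiM y_tr y'_tr; rewrite phiM y_tr y'_tr mulr_sumZ. Qed.

Section Covariance.
Variables (K : comNzRingType) (A : comAlgType K) (I : finType).
Variables (phi : A -> A) (O : I -> I -> K).
Hypothesis phiM : {morph phi : f g / f * g}.

Definition covariant (y : I -> A) := forall k, y k = \sum_n O n k *: phi (y n).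

Definition covariant_der (d : I -> A -> A) :=
  forall k g, d k (phi g) = \sum_n O n k *: phi (d n g).

Lemma covariant_mul_der (y : I -> A) (d : I -> A -> A) k l g :
  covariant y -> covariant_der d ->
  y k * d l (phi g) = \sum_n \sum_m (O n k * O m l) *: phi (y n * d m g).
Proof.
move=> y_cov d_cov; rewrite y_cov d_cov mulr_sumZ.
by under eq_bigr do under eq_bigr do rewrite -phiM.
Qed.

Lemma covariant_mul2 (y y' : I -> A) k l g :
  covariant y -> covariant y' ->
  y k * y' l * phi g = \sum_n \sum_m (O n k * O m l) *: phi (y n * y' m * g).
Proof.
move=> y_cov y'_cov; rewrite y_cov y'_cov mulr_sumZ mulr_suml.
apply: eq_bigr => n _; rewrite mulr_suml; apply: eq_bigr => m _.
by rewrite -scalerAl !phiM.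
Qed.

Lemma covariant_der2 (d d' : I -> A -> A) k l g :
  (forall n, linear (d n)) -> covariant_der d -> covariant_der d' ->
  d k (d' l (phi g)) = \sum_n \sum_m (O n k * O m l) *: phi (d n (d' m g)).
Proof.
move=> d_lin d_cov d'_cov; rewrite d'_cov linear_sumZ //.
under eq_bigr do rewrite d_cov scaler_sumr.
rewrite exchange_big; apply: eq_bigr => n _; apply: eq_bigr => m _.
by rewrite scalerA mulrC.
Qed.

End Covariance.

Section MatrixSums.
Variables (R : realType) (p : nat) (V : lmodType R[i]).
Implicit Types (X : 'I_p -> 'I_p -> V).

Lemma cRM (x y : R) : cR (x * y) = cR x * cR y.
Proof. exact: rmorphM. Qed.

Lemma cR_sum (I : Type) (r : seq I) (P : pred I) (F : I -> R) :
  cR (\sum_(i <- r | P i) F i) = \sum_(i <- r | P i) cR (F i).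
Proof. exact: rmorph_sum. Qed.

Lemma scale_cR_nat (b : bool) (v : V) : cR b%:R *: v = if b then v else 0.
Proof. by case: b; rewrite /cR ?scale1r ?scale0r. Qed.

Lemma sum_mul_rows (A B : 'M[R]_p) k l : \sum_(n < p) A k n * B l n = (A *m B^T) k l.
Proof. by rewrite mxE; apply: eq_bigr => n _; rewrite mxE. Qed.

Lemma sum_congr_mx (Q c : 'M[R]_p) X :
  \sum_(n < p) \sum_(m < p) cR (c n m) *: \sum_(k < p) \sum_(l < p) cR (Q k n * Q l m) *: X k l
  = \sum_(k < p) \sum_(l < p) cR ((Q *m c *m Q^T) k l) *: X k l.
Proof.
have scale_in n m : cR (c n m) *: \sum_(k < p) \sum_(l < p) cR (Q k n * Q l m) *: X k l
    = \sum_(k < p) \sum_(l < p) cR (Q k n * c n m * Q l m) *: X k l.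
  rewrite scaler_sumr; apply: eq_bigr => k _; rewrite scaler_sumr; apply: eq_bigr => l _.
  by rewrite scalerA -cRM mulrCA mulrA.
have expand k l : cR ((Q *m c *m Q^T) k l) *: X k l
    = \sum_(n < p) \sum_(m < p) cR (Q k n * c n m * Q l m) *: X k l.
  rewrite mxE cR_sum scaler_suml.
  under eq_bigr do rewrite mxE mulr_suml cR_sum scaler_suml.
  by rewrite exchange_big; apply: eq_bigr => n _; apply: eq_bigr => m _; rewrite !mxE.
under eq_bigr do under eq_bigr do rewrite scale_in.
under [RHS]eq_bigr do under eq_bigr do rewrite expand.
rewrite pair_big [RHS]pair_big /=.
under eq_bigr do rewrite pair_big.
under [RHS]eq_bigr do rewrite pair_big.
exact: exchange_big.
Qed.

Lemma sum_diag_mx (d : 'rV[R]_p) X :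
  \sum_(n < p) \sum_(m < p) cR (diag_mx d n m) *: X n m = \sum_(n < p) cR (d 0 n) *: X n n.
Proof.
apply: eq_bigr => n _; rewrite (bigD1 n) //= big1 ?addr0 => [|m /negbTE mn].
  by rewrite mxE eqxx mulr1n.
by rewrite mxE eq_sym mn mulr0n /cR scale0r.
Qed.

End MatrixSums.

(** * The linearised operator in relabelled oscillators *)

Section Oscillators.
Variables (R : realType) (p : nat).
Local Notation C := R[i].
Local Notation Poly := (Defs.Poly R p).
Local Notation var := (@Defs.var R p).
Local Notation ylo := (@Defs.ylo R p).
Local Notation der := (@Defs.der R p).
Implicit Types (O Rm Rb : 'M[R]_p) (f g : Poly).

Lemma relabel1 O : relabel O 1 = 1.
Proof. exact: rmorph1. Qed.

Lemma relabelD O f g : relabel O (f + g) = relabel O f + relabel O g.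
Proof. exact: rmorphD. Qed.

Lemma relabelB O f g : relabel O (f - g) = relabel O f - relabel O g.
Proof. exact: rmorphB. Qed.

Lemma relabelN O f : relabel O (- f) = - relabel O f.
Proof. exact: rmorphN. Qed.

Lemma relabelM O f g : relabel O (f * g) = relabel O f * relabel O g.
Proof. exact: rmorphM. Qed.

Lemma relabelZ O (c : C) f : relabel O (c *: f) = c *: relabel O f.
Proof. by rewrite /relabel mmapZ mul_mpolyC. Qed.

Lemma relabel_sum O (I : Type) (r : seq I) (P : pred I) (F : I -> Poly) :
  relabel O (\sum_(i <- r | P i) F i) = \sum_(i <- r | P i) relabel O (F i).
Proof. exact: rmorph_sum. Qed.

Lemma relabel_nat O m : relabel O m%:R = m%:R.
Proof. exact: rmorph_nat. Qed.

Lemma relabel_is_linear O : linear (relabel O).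
Proof. by move=> c f g; rewrite relabelD relabelZ. Qed.

Lemma relabel_var_sum O b a n :
  relabel O (var b a n) = \sum_(m < p) cR (O n m) *: var b a m.
Proof. by rewrite /relabel /var mmapX mmap1U /relabel_var enum_rankK. Qed.

Lemma relabel_ylo O b a n :
  relabel O (ylo b a n) = \sum_(m < p) cR (O n m) *: ylo b a m.
Proof.
rewrite /ylo relabel_sum.
under eq_bigr do rewrite relabelZ relabel_var_sum scaler_sumr.
rewrite exchange_big; apply: eq_bigr => m _; rewrite scaler_sumr.
by apply: eq_bigr => c _; rewrite !scalerA mulrC.
Qed.

Lemma derC b a k (c : C) : der b a k c%:MP = 0.
Proof. exact: mderivC. Qed.

Lemma der1 b a k : der b a k 1 = 0.
Proof. by rewrite -mpolyC1 derC. Qed.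

Lemma der0 b a k : der b a k 0 = 0.
Proof. exact: mderiv0. Qed.

Lemma derZ b a k (c : C) f : der b a k (c *: f) = c *: der b a k f.
Proof. exact: mderivZ. Qed.

Lemma derM b a k f g : der b a k (f * g) = der b a k f * g + f * der b a k g.
Proof. exact: mderivM. Qed.

Lemma der_sum b a k (I : Type) (r : seq I) (P : pred I) (F : I -> Poly) :
  der b a k (\sum_(i <- r | P i) F i) = \sum_(i <- r | P i) der b a k (F i).
Proof. exact: raddf_sum. Qed.

Lemma der_var b a k b' a' m :
  der b a k (var b' a' m) = ((b', a', m) == (b, a, k))%:R.
Proof.
rewrite /der /var mderivX mnm1E.
have [->|neq] := eqVneq (b', a', m) (b, a, k).
  rewrite eqxx (_ : (_ - _)%MM = 0%MM) ?mpolyX0 ?scale1r //.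
  by apply/mnmP => j; rewrite mnmBE mnm0E subnn.
rewrite (negbTE (contra_neq (@enum_rank_inj _ _ _) neq)) scale0r.
by case: eqP neq => // ->; rewrite eqxx.
Qed.

Lemma der_ylo b a k b' a' l :
  der b a k (ylo b' a' l) = if (b' == b) && (l == k) then (eps R a a')%:MP else 0.
Proof.
rewrite /Defs.ylo der_sum (bigD1 a) //= big1 ?addr0 => [|c /negbTE ca].
  by rewrite derZ der_var !xpair_eqE eqxx andbT; case: (_ && _); rewrite ?scaler0 // -alg_mpolyC.
by rewrite derZ der_var !xpair_eqE ca andbF scaler0.
Qed.

Lemma der_covariant O b a :
  covariant_der (relabel O) (fun n k => cR (O n k)) (der b a).
Proof.
move=> k; apply: substitution_chain_rule.
- exact: relabel1.
- exact: relabel_is_linear.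
- exact: relabelM.
- exact: mderiv_is_linear.
- by move=> n; apply: mderiv_is_linear.
- exact: derM.
- by move=> n; apply: derM.
move=> j; case E: (enum_val j) => [[b' a'] n].
have -> : 'X_j = var b' a' n by rewrite /Defs.var -E enum_valK.
rewrite relabel_var_sum der_sum.
under eq_bigr do rewrite derZ der_var.
under [RHS]eq_bigr do rewrite der_var relabel_nat.
rewrite (bigD1 k) // big1 ?addr0 => [|i /negbTE ik]; last first.
  by rewrite xpair_eqE ik andbF scaler0.
rewrite [RHS](bigD1 n) // big1 ?addr0 => [|i /negbTE ni]; last first.
  by rewrite xpair_eqE (eq_sym n) ni andbF scaler0.
by rewrite !xpair_eqE !eqxx !andbT.
Qed.

Lemma ylo_covariant O b a : orthogonal O ->
  covariant (relabel O) (fun n k => cR (O n k)) (ylo b a).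
Proof.
move=> /orthogonal_mulTmx OtO k.
under eq_bigr do rewrite relabel_ylo scaler_sumr.
rewrite exchange_big.
under eq_bigr => m _.
  rewrite (eq_bigr (fun n => cR (O n k * O n m) *: ylo b a m)) => [|n _]; last first.
    by rewrite scalerA cRM.
  rewrite -scaler_suml -cR_sum.
  have -> : \sum_(n < p) O n k * O n m = (O^T *m O) k m.
    by rewrite mxE; apply: eq_bigr => n _; rewrite mxE.
  rewrite OtO mxE scale_cR_nat.
  over.
by rewrite -big_mkcond (big_pred1 k) // => m; rewrite eq_sym.
Qed.

Lemma Pplus_mx Rm Rb k l : Pplus Rm Rb k l = cR ((2^-1 *: (1%:M + Rm *m Rb^T)) k l).
Proof.
rewrite /Pplus big_split /= !sum_mul_rows trmx1 mulmx1.
by rewrite [in RHS]mxE [in RHS]mxE.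
Qed.

Lemma Pminus_mx Rm Rb k l : Pminus Rm Rb k l = cR ((2^-1 *: (1%:M - Rm *m Rb^T)) k l).
Proof.
rewrite /Pminus sumrB !sum_mul_rows trmx1 mulmx1.
by rewrite !mxE.
Qed.

Definition adj_part a ad k l f : Poly :=
  ylo false a k * der true ad l f + ylo true ad l * der false a k f.

Definition twadj_part a ad k l f : Poly :=
  ylo false a k * ylo true ad l * f - der false a k (der true ad l f).

Lemma Dvier_parts Rm Rb a ad f :
  Dvier Rm Rb a ad f = \sum_(k < p) \sum_(l < p)
    (cR ((2^-1 *: (1%:M + Rm *m Rb^T)) k l) *: adj_part a ad k l f
     - ('i * cR ((2^-1 *: (1%:M - Rm *m Rb^T)) k l)) *: twadj_part a ad k l f).
Proof.
by apply: eq_bigr => k _; apply: eq_bigr => l _; rewrite Pplus_mx Pminus_mx.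
Qed.

Lemma adj_part_relabel O a ad k l g : orthogonal O ->
  adj_part a ad k l (relabel O g)
  = \sum_(n < p) \sum_(m < p) cR (O n k * O m l) *: relabel O (adj_part a ad n m g).
Proof.
move=> O_orth; rewrite /adj_part.
rewrite !(covariant_mul_der (relabelM O) _ _ _ (ylo_covariant _ _ O_orth) (der_covariant _ _ _)).
rewrite [X in _ + X]exchange_big -big_split; apply: eq_bigr => n _.
rewrite -big_split; apply: eq_bigr => m _.
by rewrite relabelD scalerDr [cR (O m l) * _]mulrC -!cRM.
Qed.

Lemma twadj_part_relabel O a ad k l g : orthogonal O ->
  twadj_part a ad k l (relabel O g)
  = \sum_(n < p) \sum_(m < p) cR (O n k * O m l) *: relabel O (twadj_part a ad n m g).
Proof.
move=> O_orth; rewrite /twadj_part.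
rewrite (covariant_mul2 (relabelM O) _ _ _ (ylo_covariant _ _ O_orth) (ylo_covariant _ _ O_orth)).
rewrite (covariant_der2 _ _ _ _ (der_covariant _ _ _) (der_covariant _ _ _)); last first.
  by move=> n; apply: mderiv_is_linear.
rewrite -sumrB; apply: eq_bigr => n _; rewrite -sumrB; apply: eq_bigr => m _.
by rewrite relabelB scalerBr -cRM.
Qed.

Lemma Dvier_relabel Rm Rb O a ad g : orthogonal O ->
  Dvier Rm Rb a ad (relabel O g) =
    \sum_(n < p) \sum_(m < p) cR ((O *m (2^-1 *: (1%:M + Rm *m Rb^T)) *m O^T) n m)
                               *: relabel O (adj_part a ad n m g)
    - 'i *: \sum_(n < p) \sum_(m < p) cR ((O *m (2^-1 *: (1%:M - Rm *m Rb^T)) *m O^T) n m)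
                               *: relabel O (twadj_part a ad n m g).
Proof.
move=> O_orth; rewrite Dvier_parts.
under eq_bigr do under eq_bigr do rewrite adj_part_relabel // twadj_part_relabel // -scalerA.
under eq_bigr do rewrite sumrB.
rewrite sumrB; under [X in _ - X]eq_bigr do rewrite -scaler_sumr.
by rewrite -scaler_sumr; congr (_ - _ *: _); apply: sum_congr_mx.
Qed.

Definition yybar_form (c : 'M[R]_p) a ad : Poly :=
  \sum_(k < p) \sum_(l < p) cR (c k l) *: (ylo false a k * ylo true ad l).

Lemma relabel_yybar_form O c a ad :
  relabel O (yybar_form c a ad) = yybar_form (O^T *m c *m O) a ad.
Proof.
transitivity (\sum_(n < p) \sum_(m < p) cR (c n m) *: \sum_(k < p) \sum_(l < p)
    cR (O^T k n * O^T l m) *: (ylo false a k * ylo true ad l)).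
  rewrite /yybar_form relabel_sum; apply: eq_bigr => n _.
  rewrite relabel_sum; apply: eq_bigr => m _; rewrite relabelZ.
  rewrite (morph_mul_expand _ _ (relabelM O) (relabel_ylo O false a) (relabel_ylo O true ad)).
  by congr (_ *: _); apply: eq_bigr => k _; apply: eq_bigr => l _; rewrite !mxE cRM.
by rewrite sum_congr_mx trmxK.
Qed.

Lemma Dvier1 Rm Rb a ad :
  Dvier Rm Rb a ad 1 = - ('i *: yybar_form (2^-1 *: (1%:M - Rm *m Rb^T)) a ad).
Proof.
rewrite Dvier_parts /yybar_form scaler_sumr -sumrN; apply: eq_bigr => k _.
rewrite scaler_sumr -sumrN; apply: eq_bigr => l _.
rewrite /adj_part /twadj_part !der1 der0 !mulr0 addr0 scaler0 mulr1 subr0 sub0r.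
by rewrite scalerA.
Qed.

Lemma sum_Dadj_Dtw1 (s : 'I_p -> bool) a ad :
  \sum_(n < p) (if s n then Dadj n a ad 1 else Dtw n a ad 1)
  = - ('i *: yybar_form (diag_mx (\row_n (~~ s n)%:R)) a ad).
Proof.
rewrite /yybar_form sum_diag_mx scaler_sumr -sumrN; apply: eq_bigr => n _.
rewrite mxE scale_cR_nat; case: (s n) => /=.
  by rewrite /Dadj !der1 !mulr0 addr0 scaler0 oppr0.
by rewrite /Dtw der1 der0 mulr1 subr0.
Qed.

(* [ylo _ 0 k] is [- var _ 1 k]: the two signs cancel. *)
Lemma der2_ylo_mul k' l' k l :
  der true ord_max l' (der false ord_max k' (ylo false ord0 k * ylo true ord0 l))
  = ((k == k') && (l == l'))%:R.
Proof.
rewrite derM !der_ylo /= mulr0 addr0; case: (k == k'); last by rewrite mul0r der0.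
rewrite derM derC mul0r add0r der_ylo /=; case: (l == l'); last by rewrite mulr0.
by rewrite -mpolyCM /Defs.eps /= mulrNN mulr1.
Qed.

Lemma der_yybar_form c k l :
  der true ord_max l (der false ord_max k (yybar_form c ord0 ord0)) = (cR (c k l))%:MP.
Proof.
rewrite /yybar_form [der false _ _ _]der_sum [der true _ _ _]der_sum.
under eq_bigr do rewrite [der false _ _ _]der_sum [der true _ _ _]der_sum.
under eq_bigr do under eq_bigr do rewrite !derZ der2_ylo_mul.
rewrite (bigD1 k) //= [X in _ + X]big1 ?addr0 => [|k' /negbTE k'k]; last first.
  by rewrite big1 // => l' _; rewrite k'k scaler0.
rewrite (bigD1 l) //= [X in _ + X]big1 ?addr0 => [|l' /negbTE l'l]; last first.
  by rewrite l'l andbF scaler0.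
by rewrite !eqxx -alg_mpolyC.
Qed.

Lemma yybar_form_inj c c' : yybar_form c ord0 ord0 = yybar_form c' ord0 ord0 -> c = c'.
Proof.
move=> cc'; apply/matrixP => k l; have := der_yybar_form c k l.
by rewrite cc' der_yybar_form => /(can_inj (@mpolyCK _ _)) /complexI.
Qed.

End Oscillators.

Lemma imaginary_neq0 (R : realType) : 'i%C != 0 :> R[i].
Proof.
apply/eqP => i0; have := sqr_i R; rewrite i0 expr0n /= => /eqP.
by rewrite eq_sym oppr_eq0 oner_eq0.
Qed.

Theorem mainTheorem1 (R : realType) (p : nat) (roots : seq 'rV[R]_p)
    (Rm Rb : 'M[R]_p) :
  finite_coxeter roots ->
  in_reflgroup roots Rm -> in_reflgroup roots Rb ->
  disentangled Rm Rb <-> (Rm *m Rb^T) *m (Rm *m Rb^T) = 1%:M.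
Proof.
move=> [roots_neq0 _ _] [vs [vs_roots ->]] [ws [ws_roots ->]].
set M := _ *m _^T.
have M_orth : orthogonal M.
  by apply: orthogonal_mul; [|apply: orthogonal_tr]; apply: refl_prod_orthogonal roots_neq0 _.
split => [[O [s [O_orth D_rel]]] | MM].
  (* At [g = 1] only the [y ybar] terms survive, and their coefficients are [P_-]. *)
  apply: (@involution_of_diag_projection _ _ _ O (fun n => ~~ s n) O_orth).
  apply: yybar_form_inj; have := D_rel ord0 ord0 1.
  rewrite relabel1 Dvier1 sum_Dadj_Dtw1 relabelN relabelZ relabel_yybar_form.
  by move=> /oppr_inj /(scalerI (imaginary_neq0 R)).
have [O O_orth [s [Pp Pm]]] := involution_projections_diag M_orth MM.
exists O, s; split => // a ad g.
rewrite Dvier_relabel // Pp Pm relabel_sum.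
apply: etrans; first exact: (congr2 (fun x y => x - 'i%C *: y) (sum_diag_mx _ _) (sum_diag_mx _ _)).
rewrite scaler_sumr -sumrB; apply: eq_bigr => n _; rewrite !mxE !scale_cR_nat.
by case: (s n); rewrite /= ?scaler0 ?subr0 // sub0r /Dtw relabelN relabelZ.
Qed.
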